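(* Let $1<\beta<\sqrt{3/2}$ and let $t_0>0$ be the unique number with $\hat\sigma(t_0,\beta)=\sqrt{\beta^2-1}$. Let $k_0=\min\{k\in\mathbb{N}:\ t_0\le 2k+2\}$. Then $l(2k_0+2,\beta)\le l(t_0,\beta)$, and the strict inequality holds if $t_0\ne 2k_0+2$.
   Context: $\mathbb{N}=\{0,1,2,\dots\}$. For $t\ge 0$ let $q(t)=\lfloor t+1\rfloor/2$ if $\lfloor t\rfloor$ is odd and $q(t)=t-\lfloor t\rfloor/2$ if $\lfloor t\rfloor$ is even, and $p(t)=t+1-q(t)$. For $\beta\ge1$ let $\hat\sigma(t,\beta)\in(0,1)$ be the unique solution $\sigma$ of $\frac{p(t)\sigma}{\sqrt{1-\sigma^2}}+\frac{q(t)\sigma}{\sqrt{\beta^2-\sigma^2}}=1$ (the map $t\mapsto\hat\sigma(t,\beta)$ is strictly decreasing from $1/\sqrt2$ to $0$). The normalized length is $l(t,\beta)=\frac{p(t)}{\sqrt{1-\hat\sigma^2}}+\frac{\beta^2q(t)}{\sqrt{\beta^2-\hat\sigma^2}}-t-\sqrt2$, $\hat\sigma=\hat\sigma(t,\beta)$. *)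

From Stdlib Require Import Reals Lra ZArith ClassicalEpsilon.
Open Scope R_scope.

(* floor of a real: Int_part r = up r - 1 is the floor. *)
Definition floorR (t : R) : Z := Int_part t.

Definition qfun (t : R) : R :=
  if Z.odd (floorR t) then IZR (floorR (t + 1)) / 2
  else t - IZR (floorR t) / 2.

Definition pfun (t : R) : R := t + 1 - qfun t.

Definition sigma_eq (t beta s : R) : Prop :=
  pfun t * s / sqrt (1 - s ^ 2) + qfun t * s / sqrt (beta ^ 2 - s ^ 2) = 1.

Definition sigma_hat (t beta : R) : R :=
  epsilon (inhabits 0) (fun s => 0 < s < 1 /\ sigma_eq t beta s).

Definition lfun (t beta : R) : R :=
  let s := sigma_hat t beta in
  pfun t / sqrt (1 - s ^ 2) + beta ^ 2 * qfun t / sqrt (beta ^ 2 - s ^ 2)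
  - t - sqrt 2.

(* For p, q >= 0 and beta >= 1 the function
     lform p q beta : sigma |-> p sqrt(1 - sigma^2) + q sqrt(beta^2 - sigma^2) + sigma
   is concave on [0, 1], and the defining equation of sigma_hat says that sigma_hat is its
   critical point; hence l(t, beta) + t + sqrt 2 is the maximum of lform (p t) (q t) beta.
   On [2k+1, 2k+2) one has q = k+1 and p = t-k, so comparing with the value at
   sigma_hat(2k+2) gives l(2k+2) - l(t) <= (2k+2-t)(sqrt(1 - sigma_hat(2k+2)^2) - 1) < 0.
   On (2k, 2k+1) one has p = k+1 and q = t-k; the hypothesis sigma_hat(t0) = sqrt(beta^2-1)
   makes sqrt(beta^2 - sigma_hat^2) = 1, so l(t0) is explicit in x = sqrt(beta^2 - 1).
   Quadratic upper bounds for the square roots, maximised in sigma, bound l(2k+2), and the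
   claim reduces to an elementary inequality for the root x of
   (k+1) x + (t0-k) x sqrt(1-x^2) = sqrt(1-x^2). *)

From Stdlib Require Import Reals Lra Psatz ZArith Ranalysis5 ClassicalEpsilon.
Open Scope R_scope.

Definition lform (P Q b s : R) : R := P * sqrt (1 - s ^ 2) + Q * sqrt (b ^ 2 - s ^ 2) + s.

Lemma sqrt_le_of_le_sq (c d : R) : 0 <= d -> c <= d * d -> sqrt c <= d.
Proof. intros Hd Hc. rewrite <- (sqrt_square d) by lra. apply sqrt_le_1_alt. lra. Qed.

Lemma sqrt_mul_sqrt_le (c r s : R) : 0 <= r -> r ^ 2 < c -> 0 <= s -> s ^ 2 <= c ->
  sqrt (c - s ^ 2) * sqrt (c - r ^ 2) <= c - r * s.
Proof.
  intros Hr Hrc Hs Hsc.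
  assert (Hp : 0 <= c - r * s) by (assert (0 <= (r - s) ^ 2) by apply pow2_ge_0; nra).
  rewrite <- sqrt_mult_alt by lra.
  apply sqrt_le_of_le_sq; [exact Hp|].
  assert (0 <= c * (r - s) ^ 2) by (apply Rmult_le_pos; [nra | apply pow2_ge_0]).
  nra.
Qed.

Lemma sqrt_one_sub_sq_le (s : R) : 0 <= s <= 1 -> sqrt (1 - s ^ 2) <= 1 - s ^ 2 / 2.
Proof. intro Hs. apply sqrt_le_of_le_sq; nra. Qed.

Lemma sqrt_one_sub_ge (y : R) : 0 <= y <= 1 / 2 -> 1 - y / 2 - y * y / 4 <= sqrt (1 - y).
Proof.
  intro Hy.
  destruct (Rle_or_lt 0 (1 - y / 2 - y * y / 4)) as [Hp|Hn].
  2: { pose proof (sqrt_pos (1 - y)). lra. }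
  rewrite <- (sqrt_square (1 - y / 2 - y * y / 4)) by exact Hp.
  apply sqrt_le_1_alt.
  assert (0 <= (y * y) * (1 / 4 - y / 4 - y * y / 16)) by (apply Rmult_le_pos; nra).
  nra.
Qed.

Lemma lform_at_root (P Q b s : R) : 1 <= b -> 0 < s < 1 ->
  P * s / sqrt (1 - s ^ 2) + Q * s / sqrt (b ^ 2 - s ^ 2) = 1 ->
  lform P Q b s = P / sqrt (1 - s ^ 2) + b ^ 2 * Q / sqrt (b ^ 2 - s ^ 2).
Proof.
  intros Hb Hs He. unfold lform.
  assert (HA : 0 < sqrt (1 - s ^ 2)) by (apply sqrt_lt_R0; nra).
  assert (HB : 0 < sqrt (b ^ 2 - s ^ 2)) by (apply sqrt_lt_R0; nra).
  assert (SA : sqrt (1 - s ^ 2) * sqrt (1 - s ^ 2) = 1 - s ^ 2) by (apply sqrt_sqrt; nra).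
  assert (SB : sqrt (b ^ 2 - s ^ 2) * sqrt (b ^ 2 - s ^ 2) = b ^ 2 - s ^ 2)
    by (apply sqrt_sqrt; nra).
  set (A := sqrt (1 - s ^ 2)) in *. set (B := sqrt (b ^ 2 - s ^ 2)) in *.
  assert (E : P / A + b ^ 2 * Q / B - (P * A + Q * B + s)
              = s * (P * s / A + Q * s / B - 1)
                + P * (1 - s ^ 2 - A * A) / A + Q * (b ^ 2 - s ^ 2 - B * B) / B)
    by (field; lra).
  rewrite He, SA, SB in E. unfold Rdiv in E. lra.
Qed.

Lemma lform_le_root (P Q b s r : R) : 0 <= P -> 0 <= Q -> 1 <= b -> 0 < s < 1 ->
  P * s / sqrt (1 - s ^ 2) + Q * s / sqrt (b ^ 2 - s ^ 2) = 1 ->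
  0 <= r <= 1 -> lform P Q b r <= lform P Q b s.
Proof.
  intros HP HQ Hb Hs He Hr.
  rewrite (lform_at_root P Q b s Hb Hs He). unfold lform.
  assert (HA : 0 < sqrt (1 - s ^ 2)) by (apply sqrt_lt_R0; nra).
  assert (HB : 0 < sqrt (b ^ 2 - s ^ 2)) by (apply sqrt_lt_R0; nra).
  assert (T1 := sqrt_mul_sqrt_le 1 s r ltac:(lra) ltac:(nra) ltac:(lra) ltac:(nra)).
  assert (T2 := sqrt_mul_sqrt_le (b ^ 2) s r ltac:(lra) ltac:(nra) ltac:(lra) ltac:(nra)).
  set (A := sqrt (1 - s ^ 2)) in *. set (B := sqrt (b ^ 2 - s ^ 2)) in *.
  assert (E1 : sqrt (1 - r ^ 2) <= (1 - s * r) / A)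
    by (apply (Rmult_le_reg_r A); [lra | field_simplify; lra]).
  assert (E2 : sqrt (b ^ 2 - r ^ 2) <= (b ^ 2 - s * r) / B)
    by (apply (Rmult_le_reg_r B); [lra | field_simplify; lra]).
  assert (E3 : P * ((1 - s * r) / A) + Q * ((b ^ 2 - s * r) / B) + r
               = P / A + b ^ 2 * Q / B - r * (P * s / A + Q * s / B - 1)) by (field; lra).
  rewrite He in E3. nra.
Qed.

Lemma continuity_pt_sqrt_sub_sq (c r : R) : 0 < c - r ^ 2 ->
  continuity_pt (fun s => sqrt (c - s ^ 2)) r.
Proof.
  intro H. apply (continuity_pt_comp (fun s => c - s ^ 2) sqrt).
  - apply derivable_continuous_pt. reg.
  - apply continuity_pt_sqrt. lra.
Qed.

Lemma sigma_eq_root_exists (P Q b : R) : 1 <= P -> 0 < Q -> 1 <= b ->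
  exists s, 0 < s < 1 /\ P * s / sqrt (1 - s ^ 2) + Q * s / sqrt (b ^ 2 - s ^ 2) = 1.
Proof.
  intros HP HQ Hb.
  set (f := fun s => P * s * sqrt (b ^ 2 - s ^ 2) + Q * s * sqrt (1 - s ^ 2)
                     - sqrt (1 - s ^ 2) * sqrt (b ^ 2 - s ^ 2)).
  assert (Hc : forall r, 0 <= r <= 4 / 5 -> continuity_pt f r).
  { intros r Hr. unfold f.
    assert (h1 := continuity_pt_sqrt_sub_sq 1 r ltac:(nra)).
    assert (h2 := continuity_pt_sqrt_sub_sq (b ^ 2) r ltac:(nra)).
    apply continuity_pt_minus; [apply continuity_pt_plus | apply continuity_pt_mult; auto];
      apply continuity_pt_mult; auto; apply derivable_continuous_pt; reg. }
  assert (Hf0 : f 0 < 0).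
  { assert (0 < sqrt (b ^ 2 - 0 ^ 2)) by (apply sqrt_lt_R0; nra).
    assert (0 < sqrt (1 - 0 ^ 2)) by (apply sqrt_lt_R0; nra).
    unfold f. nra. }
  assert (Hf1 : 0 < f (4 / 5)).
  { assert (E : sqrt (1 - (4 / 5) ^ 2) = 3 / 5) by (apply sqrt_lem_1; lra).
    assert (0 < sqrt (b ^ 2 - (4 / 5) ^ 2)) by (apply sqrt_lt_R0; nra).
    unfold f. rewrite E. nra. }
  destruct (IVT_interv f 0 (4 / 5) Hc ltac:(lra) Hf0 Hf1) as [s [Hs Hfs]].
  assert (s <> 0) by (intro; subst; lra).
  assert (HA : 0 < sqrt (1 - s ^ 2)) by (apply sqrt_lt_R0; nra).
  assert (HB : 0 < sqrt (b ^ 2 - s ^ 2)) by (apply sqrt_lt_R0; nra).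
  exists s. split; [lra|]. unfold f in Hfs.
  set (A := sqrt (1 - s ^ 2)) in *. set (B := sqrt (b ^ 2 - s ^ 2)) in *.
  replace (P * s / A + Q * s / B) with ((P * s * B + Q * s * A) / (A * B)) by (field; lra).
  replace (P * s * B + Q * s * A) with (A * B) by lra.
  field. lra.
Qed.

Lemma sigma_hat_spec (t b : R) : 1 <= pfun t -> 0 < qfun t -> 1 <= b ->
  0 < sigma_hat t b < 1 /\ sigma_eq t b (sigma_hat t b).
Proof.
  intros HP HQ Hb. unfold sigma_hat. apply epsilon_spec.
  exact (sigma_eq_root_exists (pfun t) (qfun t) b HP HQ Hb).
Qed.

Lemma lfun_lform (t b : R) : 1 <= pfun t -> 0 < qfun t -> 1 <= b ->
  lfun t b = lform (pfun t) (qfun t) b (sigma_hat t b) - t - sqrt 2.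
Proof.
  intros HP HQ Hb. destruct (sigma_hat_spec t b HP HQ Hb) as [Hs He].
  unfold lfun. rewrite (lform_at_root _ _ _ _ Hb Hs He). reflexivity.
Qed.

Lemma lform_le_lfun (t b r : R) : 1 <= pfun t -> 0 < qfun t -> 1 <= b -> 0 <= r <= 1 ->
  lform (pfun t) (qfun t) b r - t - sqrt 2 <= lfun t b.
Proof.
  intros HP HQ Hb Hr. destruct (sigma_hat_spec t b HP HQ Hb) as [Hs He].
  rewrite (lfun_lform t b HP HQ Hb).
  assert (lform (pfun t) (qfun t) b r <= lform (pfun t) (qfun t) b (sigma_hat t b))
    by (apply lform_le_root; auto; lra).
  lra.
Qed.

Lemma floorR_eq (r : R) (z : Z) : IZR z <= r < IZR z + 1 -> floorR r = z.
Proof.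
  intros [H1 H2]. unfold floorR, Int_part.
  assert (z + 1 = up r)%Z by (apply tech_up; rewrite plus_IZR; simpl; lra).
  lia.
Qed.

Lemma pq_even (k : nat) :
  qfun (2 * INR k + 2) = INR k + 1 /\ pfun (2 * INR k + 2) = INR k + 2.
Proof.
  assert (F : floorR (2 * INR k + 2) = (2 * (Z.of_nat k + 1))%Z).
  { apply floorR_eq. rewrite mult_IZR, plus_IZR, <- INR_IZR_INZ. simpl. lra. }
  assert (Q : qfun (2 * INR k + 2) = INR k + 1).
  { unfold qfun. rewrite F, Z.odd_mul. cbn [Z.odd orb].
    rewrite mult_IZR, plus_IZR, <- INR_IZR_INZ. simpl. lra. }
  split; [exact Q|]. unfold pfun. rewrite Q. lra.
Qed.

Lemma pq_lower_half (k : nat) (t : R) : 2 * INR k <= t < 2 * INR k + 1 ->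
  qfun t = t - INR k /\ pfun t = INR k + 1.
Proof.
  intro H.
  assert (F : floorR t = (2 * Z.of_nat k)%Z).
  { apply floorR_eq. rewrite mult_IZR, <- INR_IZR_INZ. simpl. lra. }
  assert (Q : qfun t = t - INR k).
  { unfold qfun. rewrite F, Z.odd_mul. cbn [Z.odd orb].
    rewrite mult_IZR, <- INR_IZR_INZ. simpl. lra. }
  split; [exact Q|]. unfold pfun. rewrite Q. lra.
Qed.

Lemma pq_upper_half (k : nat) (t : R) : 2 * INR k + 1 <= t < 2 * INR k + 2 ->
  qfun t = INR k + 1 /\ pfun t = t - INR k.
Proof.
  intro H.
  assert (F : floorR t = (1 + 2 * Z.of_nat k)%Z).
  { apply floorR_eq. rewrite plus_IZR, mult_IZR, <- INR_IZR_INZ. simpl. lra. }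
  assert (F1 : floorR (t + 1) = (2 * (Z.of_nat k + 1))%Z).
  { apply floorR_eq. rewrite mult_IZR, plus_IZR, <- INR_IZR_INZ. simpl. lra. }
  assert (Q : qfun t = INR k + 1).
  { unfold qfun. rewrite F, Z.odd_add_mul_2. cbn [Z.odd]. rewrite F1.
    rewrite mult_IZR, plus_IZR, <- INR_IZR_INZ. simpl. lra. }
  split; [exact Q|]. unfold pfun. rewrite Q. lra.
Qed.

Lemma lfun_even_lt_upper_half (b t : R) (k : nat) : 1 <= b ->
  2 * INR k + 1 <= t < 2 * INR k + 2 -> lfun (2 * INR k + 2) b < lfun t b.
Proof.
  intros Hb Ht. assert (Hk := pos_INR k).
  set (T := 2 * INR k + 2).
  destruct (pq_even k) as [QT PT]. destruct (pq_upper_half k t Ht) as [Qt Pt]. fold T in QT, PT.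
  destruct (sigma_hat_spec T b ltac:(lra) ltac:(lra) Hb) as [Hs _].
  assert (LT := lfun_lform T b ltac:(lra) ltac:(lra) Hb).
  assert (Lt := lform_le_lfun t b (sigma_hat T b) ltac:(lra) ltac:(lra) Hb ltac:(lra)).
  set (s := sigma_hat T b) in *.
  assert (HA := sqrt_one_sub_sq_le s ltac:(lra)).
  rewrite PT, QT in LT. rewrite Pt, Qt in Lt. unfold lform in LT, Lt.
  assert (0 < (T - t) * (1 - sqrt (1 - s ^ 2))) by (apply Rmult_lt_0_compat; unfold T; nra).
  unfold T in *. nra.
Qed.

Lemma quartic_gap (n : R) : 2 <= n ->
  (2 * n + 1) * ((2 * n - 1) ^ 2 + n ^ 2) < (2 * n - 1) ^ 4.
Proof.
  intro Hn. set (m := n - 2). assert (Hm : 0 <= m) by (unfold m; lra).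
  replace n with (m + 2) by (unfold m; ring).
  assert (0 <= m * m) by nra. assert (0 <= m * m * m) by nra.
  assert (0 <= m * m * m * m) by nra. nra.
Qed.

Lemma weighted_sq_sum_lt_one (n v w : R) : 2 <= n ->
  (v * (2 * n - 1)) ^ 2 < 1 -> (w * (2 * n - 1) ^ 2) ^ 2 < 1 ->
  (2 * n + 1) * (v ^ 2 + n ^ 2 * w ^ 2) < 1.
Proof.
  intros Hn Hv Hw. assert (Hq4 := quartic_gap n Hn).
  set (d := 2 * n - 1) in *. assert (Hd : 3 <= d) by (unfold d; lra).
  assert (E : (2 * n + 1) * (v ^ 2 + n ^ 2 * w ^ 2) * d ^ 4
              = (2 * n + 1) * ((v * d) ^ 2 * d ^ 2 + n ^ 2 * (w * d ^ 2) ^ 2)) by ring.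
  assert ((2 * n + 1) * ((v * d) ^ 2 * d ^ 2 + n ^ 2 * (w * d ^ 2) ^ 2)
          < (2 * n + 1) * (d ^ 2 + n ^ 2)).
  { apply Rmult_lt_compat_l; [lra|].
    assert ((v * d) ^ 2 * d ^ 2 < 1 * d ^ 2) by (apply Rmult_lt_compat_r; nra).
    assert (n ^ 2 * (w * d ^ 2) ^ 2 < n ^ 2 * 1) by (apply Rmult_lt_compat_l; nra).
    lra. }
  assert (0 < d ^ 4) by nra. nra.
Qed.

Lemma lform_even_le (x n b s : R) : 0 <= n -> b ^ 2 = 1 + x ^ 2 -> 0 <= s <= 1 ->
  lform (n + 1) n b s <= 2 * n + 1 + n * x ^ 2 / 2 + 1 / (2 * (2 * n + 1)).
Proof.
  intros Hn Hb Hs. unfold lform.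
  assert (HA := sqrt_one_sub_sq_le s Hs).
  assert (HB : sqrt (b ^ 2 - s ^ 2) <= 1 + (x ^ 2 - s ^ 2) / 2).
  { apply sqrt_le_of_le_sq; [nra|]. rewrite Hb.
    assert (0 <= (x ^ 2 - s ^ 2) ^ 2) by apply pow2_ge_0. nra. }
  assert (Hq : s - (2 * n + 1) * s ^ 2 / 2 <= 1 / (2 * (2 * n + 1))).
  { assert (0 <= ((2 * n + 1) * s - 1) ^ 2) by apply pow2_ge_0.
    apply (Rmult_le_reg_r (2 * (2 * n + 1))); [lra|]. field_simplify; [nra|lra]. }
  assert (0 <= sqrt (1 - s ^ 2)) by apply sqrt_pos.
  nra.
Qed.

Section RootInequalities.

Variables x a : R.
Hypothesis Hx : 0 < x.
Hypothesis Ha : 0 < a.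
Hypothesis Haa : a * a = 1 - x * x.

Lemma root_bounds (n q : R) : 2 <= n -> n * x + q * x * a = a -> n - 1 < q < n ->
  x * (2 * n - 1) < 1 /\ 1 - 2 * n * x <= x * x.
Proof.
  intros Hn He Hq.
  assert (Ha1 : a <= 1) by nra.
  split.
  - assert (0 < (q - (n - 1)) * (x * a)) by (apply Rmult_lt_0_compat; nra).
    assert (0 <= (1 - a) * (x * n)) by (apply Rmult_le_pos; nra).
    assert (x * (2 * n - 1) * a < 1 * a) by nra.
    apply (Rmult_lt_reg_r a); lra.
  - assert (0 < (n - q) * (x * a)) by (apply Rmult_lt_0_compat; nra).
    assert (2 * a <= 2 * n * x * (1 + a)) by nra.
    nra.
Qed.

Lemma root_gap (n q : R) : 2 <= n -> n * x + q * x * a = a -> n - 1 < q < n ->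
  n * x ^ 2 / 2 + 1 / (2 * (2 * n + 1)) < n * (a - 1) + x.
Proof.
  intros Hn He Hq.
  destruct (root_bounds n q Hn He Hq) as [Hxd Hu2].
  set (d := 2 * n - 1) in *. set (y := x * x) in *. set (u := 2 * n * x) in *.
  assert (Hd : 3 <= d) by (unfold d; lra).
  assert (Hx3 : x < 1 / 3) by nra.
  assert (Hy : 0 <= y <= 1 / 2) by (unfold y; nra).
  assert (Hay := sqrt_one_sub_ge y Hy).
  replace (sqrt (1 - y)) with a in Hay by (symmetry; apply sqrt_lem_1; unfold y in *; lra).
  assert (Hu1 : (u - 1) * d < 1) by (unfold u, d in *; nra).
  assert (Hyd : y * d < x).
  { assert (x * (x * d) < x * 1) by (apply Rmult_lt_compat_l; lra). unfold y; nra. }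
  assert (Hud : ((1 - u) * d) ^ 2 < 1).
  { assert ((1 - u) * d <= y * d) by (apply Rmult_le_compat_r; lra). nra. }
  assert (Hyd2 : (y * d ^ 2) ^ 2 < 1).
  { assert (y * d ^ 2 = (x * d) ^ 2) by (unfold y; ring).
    assert (0 < x * d) by (apply Rmult_lt_0_compat; lra).
    assert ((x * d) ^ 2 < 1) by nra. nra. }
  assert (Hsmall := weighted_sq_sum_lt_one n (1 - u) y Hn Hud Hyd2).
  (* By [Hay] it suffices that [x - n y - n y^2/4 > 1/(2(2n+1))]; in terms of [u = 2 n x]
     this says that [(1 - u)^2 + n^2 y^2 < 1/(2n+1)], which is [Hsmall]. *)
  assert (E : 4 * n * (x - n * y - n * (y * y) / 4) = 1 - (1 - u) ^ 2 - n ^ 2 * y ^ 2)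
    by (unfold u, y; field).
  assert (G : 1 / (2 * (2 * n + 1)) < x - n * y - n * (y * y) / 4).
  { apply (Rmult_lt_reg_l (4 * n)); [lra|]. rewrite E.
    apply (Rmult_lt_reg_l (2 * n + 1)); [lra|]. field_simplify; lra. }
  unfold y in *. nra.
Qed.

Lemma lform_two_one_lt (b q s : R) : 0 < b -> b ^ 2 = 1 + x ^ 2 ->
  x + q * x * a = a -> 0 < q < 1 -> 0 <= s <= 1 -> lform 2 1 b s < a + x + 2.
Proof.
  intros Hb Hbb He Hq Hs. unfold lform.
  assert (Hb1 : 1 <= b) by nra.
  assert (HA := sqrt_one_sub_sq_le s Hs).
  assert (HB : sqrt (b ^ 2 - s ^ 2) <= b - s ^ 2 / (2 * b)).
  { assert (s ^ 2 / (2 * b) <= 1 / 2).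
    { apply (Rmult_le_reg_r (2 * b)); [lra|]. field_simplify; [nra|lra]. }
    apply sqrt_le_of_le_sq; [nra|].
    assert (E : (b - s ^ 2 / (2 * b)) * (b - s ^ 2 / (2 * b))
                = b ^ 2 - s ^ 2 + (s ^ 2 / (2 * b)) ^ 2) by (field; lra).
    rewrite E. assert (0 <= (s ^ 2 / (2 * b)) ^ 2) by apply pow2_ge_0. lra. }
  assert (Hxa : x < a) by (assert (0 < q * x * a) by (repeat apply Rmult_lt_0_compat; lra); lra).
  assert (Hxa2 : a <= x * (1 + a))
    by (assert (0 < (1 - q) * (x * a)) by (apply Rmult_lt_0_compat; nra); nra).
  (* For q in (0, 1) the root is x >= 0.45, which gives b <= x + a - 0.18, while
     s - 1.4 s^2 < 0.18 for every s. *)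
  assert (Hx45 : 45 / 100 <= x).
  { destruct (Rle_or_lt (45 / 100) x) as [H|H]; [exact H|].
    assert (a * a > 79 / 100) by nra. assert (a > 88 / 100) by nra. nra. }
  assert (Hb54 : b <= 5 / 4) by nra.
  assert (K1 : b <= x + a - 18 / 100).
  { assert (0 <= (x - 45 / 100) * (a - x)) by (apply Rmult_le_pos; lra).
    assert (b ^ 2 <= (x + a - 18 / 100) ^ 2) by nra.
    nra. }
  assert (K2 : 4 / 10 * s ^ 2 <= s ^ 2 / (2 * b)).
  { apply (Rmult_le_reg_r (2 * b)); [lra|]. field_simplify; [|lra]. nra. }
  assert (K3 : s - 14 / 10 * s ^ 2 < 18 / 100)
    by (assert (0 <= (s - 5 / 14) ^ 2) by apply pow2_ge_0; nra).
  nra.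
Qed.

End RootInequalities.

Lemma lfun_even_lt_lower_half (b t : R) (k : nat) : 1 < b ->
  2 * INR k < t < 2 * INR k + 1 -> sigma_hat t b = sqrt (b ^ 2 - 1) ->
  lfun (2 * INR k + 2) b < lfun t b.
Proof.
  intros Hb Ht Hsig. assert (Hk := pos_INR k).
  destruct (pq_lower_half k t ltac:(lra)) as [Qt Pt].
  destruct (pq_even k) as [QT PT].
  destruct (sigma_hat_spec t b ltac:(lra) ltac:(lra) ltac:(lra)) as [Hs He].
  assert (Lt := lfun_lform t b ltac:(lra) ltac:(lra) ltac:(lra)).
  unfold sigma_eq in He. unfold lform in Lt. rewrite Hsig in Hs, He, Lt.
  set (x := sqrt (b ^ 2 - 1)) in *.
  assert (Hxx : x ^ 2 = b ^ 2 - 1) by (unfold x; rewrite pow2_sqrt; nra).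
  assert (Hbx : sqrt (b ^ 2 - x ^ 2) = 1)
    by (rewrite Hxx; replace (b ^ 2 - (b ^ 2 - 1)) with 1 by ring; apply sqrt_1).
  assert (Haa : sqrt (1 - x ^ 2) * sqrt (1 - x ^ 2) = 1 - x * x) by (rewrite sqrt_sqrt; nra).
  assert (Ha : 0 < sqrt (1 - x ^ 2)) by (apply sqrt_lt_R0; nra).
  set (a := sqrt (1 - x ^ 2)) in *.
  rewrite Pt, Qt, Hbx in Lt. rewrite Pt, Qt, Hbx in He.
  assert (Hroot : (INR k + 1) * x + (t - INR k) * x * a = a).
  { assert (E : (INR k + 1) * x = (INR k + 1) * x / a * a) by (field; lra).
    rewrite E. replace ((INR k + 1) * x / a) with (1 - (t - INR k) * x) by lra. ring. }
  destruct (sigma_hat_spec (2 * INR k + 2) b ltac:(lra) ltac:(lra) ltac:(lra)) as [Hs1 _].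
  assert (LT := lfun_lform (2 * INR k + 2) b ltac:(lra) ltac:(lra) ltac:(lra)).
  rewrite PT, QT in LT.
  destruct k as [|k].
  - change (INR 0) with 0 in *.
    replace (2 * 0 + 2) with 2 in * by ring.
    assert (K := lform_two_one_lt x a (proj1 Hs) Ha Haa b t (sigma_hat 2 b)
                   ltac:(lra) ltac:(lra) ltac:(lra) ltac:(lra) ltac:(lra)).
    replace (0 + 2) with 2 in LT by ring. replace (0 + 1) with 1 in LT by ring.
    lra.
  - assert (Hk1 : 1 <= INR (S k)) by (rewrite S_INR; assert (Hk' := pos_INR k); lra).
    set (n := INR (S k) + 1) in *.
    assert (Hgap := root_gap x a (proj1 Hs) Ha Haa n (t - INR (S k))
                      ltac:(unfold n; lra) Hroot ltac:(unfold n; lra)).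
    assert (Hle := lform_even_le x n b (sigma_hat (2 * INR (S k) + 2) b)
                     ltac:(unfold n; lra) ltac:(lra) ltac:(lra)).
    replace (INR (S k) + 2) with (n + 1) in LT by (unfold n; ring).
    unfold n in *. lra.
Qed.

Lemma even_bound_min (t : R) (k0 : nat) : 0 < t ->
  (forall k : nat, t <= 2 * INR k + 2 -> (k0 <= k)%nat) -> 2 * INR k0 < t.
Proof.
  intros Ht Hmin. destruct k0 as [|k]; [simpl; lra|].
  destruct (Rle_or_lt t (2 * INR k + 2)) as [H|H].
  - specialize (Hmin k H). lia.
  - rewrite S_INR. lra.
Qed.

Theorem theorem3p5 (beta t0 : R) (k0 : nat) :
  1 < beta -> beta < sqrt (3 / 2) ->
  0 < t0 -> sigma_hat t0 beta = sqrt (beta ^ 2 - 1) ->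
  (t0 <= 2 * INR k0 + 2 /\ (forall k : nat, t0 <= 2 * INR k + 2 -> (k0 <= k)%nat)) ->
  lfun (2 * INR k0 + 2) beta <= lfun t0 beta /\
  (t0 <> 2 * INR k0 + 2 -> lfun (2 * INR k0 + 2) beta < lfun t0 beta).
Proof.
  (* [beta < sqrt (3/2)] only guarantees that t0 exists. *)
  intros Hb _ Ht0 Hsig [Hk0 Hmin].
  assert (Hlow := even_bound_min t0 k0 Ht0 Hmin).
  destruct (Req_dec t0 (2 * INR k0 + 2)) as [Heq|Hne].
  { rewrite Heq. split; [lra | intro H; contradiction]. }
  enough (Hlt : lfun (2 * INR k0 + 2) beta < lfun t0 beta) by (split; [lra | auto]).
  destruct (Rlt_or_le t0 (2 * INR k0 + 1)) as [Hl|Hu].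
  - exact (lfun_even_lt_lower_half beta t0 k0 Hb (conj Hlow Hl) Hsig).
  - apply lfun_even_lt_upper_half; lra.
Qed.
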